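(* Let $\kappa\in(0,1)$ and let $d_A>0$, $\mu>1$, $d_A'>0$, $\pi_1'\in(0,1]$, $\pi_1$, $d_S$ be real numbers satisfying \[ d_S=(\mu-1)\bigl(1-e^{-\pi_1'd_A'/(\mu-1)}\bigr),\qquad d_A=(1-\pi_1')d_A'+d_S,\qquad \pi_1=\frac{d_S}{d_A}, \] together with the ''cube root principle'' \[ \pi_1=\kappa^{1/3},\qquad 1-e^{-\pi_1'd_A'/(\mu-1)}=\kappa^{1/3}. \] Then \[ \mu=1+d_A,\qquad d_A'=d_A\bigl(1-\kappa^{1/3}-\log(1-\kappa^{1/3})\bigr),\qquad \pi_1'=\Bigl(1-\frac{1-\kappa^{1/3}}{\log(1-\kappa^{1/3})}\Bigr)^{-1}. \]
   Context: In the paper these quantities have the interpretation: $d_A$ mean degree in the agreement graph, $d_A'$ mean agreement multi-degree, $\pi_1'$ proportion of agreement multi-edges that are sibling multi-edges, $d_S$ mean number of distinct sibling neighbours, $\mu$ mean offspring of the latent tree, $\kappa$ the average local clustering coefficient; for the statement only the displayed relations matter. *)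

From Stdlib Require Import Reals.
Open Scope R_scope.

Definition cbrt (k : R) : R := Rpower k (1/3).

From Stdlib Require Import Reals Lra.
Open Scope R_scope.

(* Write c = cbrt kappa and y = - pi1' dA' / (mu - 1) < 0.  The second cube
   root equation says c = 1 - e^y, i.e. y = ln (1 - c), and so (without using
   the hypothesis on kappa) 0 < c < 1.  The first one gives dS = c dA, which with
   dS = (mu - 1) c forces mu - 1 = dA.  Then pi1' dA' = - dA y, and the
   relation dA = (1 - pi1') dA' + c dA is linear in dA', which gives dA'
   and then pi1'. *)

Lemma one_minus_exp_neg_bounds (y : R) : y < 0 -> 0 < 1 - exp y < 1.
Proof.
  intros Hy.
  assert (exp y < 1) by (rewrite <- exp_0; apply exp_increasing; exact Hy).
  pose proof (exp_pos y); lra.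
Qed.

Lemma ln_one_minus_one_minus_exp (y : R) : ln (1 - (1 - exp y)) = y.
Proof. replace (1 - (1 - exp y)) with (exp y) by ring; apply ln_exp. Qed.

Lemma neg_div_lt0 (a b : R) : 0 < a -> 0 < b -> - a / b < 0.
Proof.
  intros Ha Hb; unfold Rdiv.
  pose proof (Rinv_0_lt_compat b Hb); nra.
Qed.

Lemma split_total_eq (d c y x p : R) :
  p * x = - d * y -> d = (1 - p) * x + c * d -> x = d * (1 - c - y).
Proof. intros Hpx Hd; lra. Qed.

Lemma split_weight_eq (d c y x p : R) :
  0 < d -> y < 0 -> c < 1 ->
  p * x = - d * y -> x = d * (1 - c - y) ->
  p = / (1 - (1 - c) / y).
Proof.
  intros Hd Hy Hc Hpx Hx.
  subst x.
  assert (Hpos : 0 < 1 - c - y) by lra.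
  assert (Hp : p = - y / (1 - c - y)).
  { apply (Rmult_eq_reg_r (d * (1 - c - y))); [| nra].
    field_simplify; lra. }
  rewrite Hp; field; lra.
Qed.

Theorem lemma9p1 (kappa dA mu dA' pi1' pi1 dS : R) :
  0 < kappa < 1 ->
  0 < dA -> 1 < mu -> 0 < dA' -> 0 < pi1' <= 1 ->
  dS = (mu - 1) * (1 - exp (- (pi1' * dA') / (mu - 1))) ->
  dA = (1 - pi1') * dA' + dS ->
  pi1 = dS / dA ->
  pi1 = cbrt kappa ->
  1 - exp (- (pi1' * dA') / (mu - 1)) = cbrt kappa ->
  mu = 1 + dA /\
  dA' = dA * (1 - cbrt kappa - ln (1 - cbrt kappa)) /\
  pi1' = / (1 - (1 - cbrt kappa) / ln (1 - cbrt kappa)).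
Proof.
  intros _ HdA Hmu HdA' Hp HdS HdA_split Hpi1 Hpi1_c Hexp_c.
  set (c := cbrt kappa) in *.
  set (y := - (pi1' * dA') / (mu - 1)) in *.
  assert (Hy : y < 0) by (apply neg_div_lt0; nra).
  assert (Hc : 0 < c < 1) by (rewrite <- Hexp_c; now apply one_minus_exp_neg_bounds).
  assert (Hln : ln (1 - c) = y) by (rewrite <- Hexp_c; apply ln_one_minus_one_minus_exp).
  assert (HdS_c : dS = c * dA) by (rewrite <- Hpi1_c, Hpi1; field; lra).
  assert (Hmu_dA : mu - 1 = dA).
  { rewrite Hexp_c, HdS_c in HdS.
    apply (Rmult_eq_reg_l c); lra. }
  assert (Hpx : pi1' * dA' = - dA * y) by (unfold y; rewrite Hmu_dA; field; lra).
  rewrite HdS_c in HdA_split.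
  assert (HdA'_sol : dA' = dA * (1 - c - y))
    by exact (split_total_eq _ _ _ _ _ Hpx HdA_split).
  rewrite Hln.
  repeat split; [lra | exact HdA'_sol |].
  exact (split_weight_eq dA c y dA' pi1' HdA Hy (proj2 Hc) Hpx HdA'_sol).
Qed.
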